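(* Let $n,k$ be positive integers. Define $\varphi:[(k+1)n]\to[kn]$ by $\varphi(x)=x-\lfloor (x-1)/(k+1)\rfloor$ for $x<n(k+1)$ and $\varphi(n(k+1))=1$; thus $\varphi$ identifies exactly the pairs $\{k+1,k+2\},\{2(k+1),2(k+1)+1\},\dots,\{(n-1)(k+1),(n-1)(k+1)+1\},\{n(k+1),1\}$ and preserves the cyclic order otherwise. For $\pi\in NC_{k+1}(n)$ let $f(\pi)$ be the finest partition of $[kn]$ such that for every block $V\in\pi$ the set $\varphi(V)$ is contained in a single block of $f(\pi)$. Then $f(\pi)\in NC^k(n)$ for all $\pi\in NC_{k+1}(n)$, and $f:NC_{k+1}(n)\to NC^k(n)$ is a bijection.
   Context: A partition $\pi$ of $[N]=\{1,\dots,N\}$ is non-crossing if there are no $1\le a<b<c<d\le N$ with $a,c$ in one block and $b,d$ in another. $NC^k(n)$ is the set of non-crossing partitions of $[kn]$ all of whose blocks have size divisible by $k$. $NC_{k+1}(n)$ is the set of non-crossing partitions of $[(k+1)n]$ all of whose blocks have size exactly $k+1$. *)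

(* Ground set [N] = {1..N} is modelled 0-based as 'I_N
   (element i : 'I_N stands for i+1); the cyclic/linear order is the order on 'I_N. *)
From mathcomp Require Import all_boot.
Set Implicit Arguments.
Unset Strict Implicit.
Unset Printing Implicit Defensive.

Definition is_set_partition (N : nat) (P : {set {set 'I_N}}) : bool :=
  partition P [set: 'I_N].

Definition noncrossing (N : nat) (P : {set {set 'I_N}}) : Prop :=
  forall (a b c d : 'I_N) (A B : {set 'I_N}),
    A \in P -> B \in P -> A != B ->
    a < b -> b < c -> c < d ->
    a \in A -> c \in A -> b \in B -> d \in B -> False.

Definition NCup (k n : nat) (P : {set {set 'I_(k * n)}}) : Prop :=
  is_set_partition P /\ noncrossing P /\ (forall B, B \in P -> k %| #|B|).

Definition NClow (k n : nat) (P : {set {set 'I_(k.+1 * n)}}) : Prop :=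
  is_set_partition P /\ noncrossing P /\ (forall B, B \in P -> #|B| = k.+1).

(* The map phi, 0-based: for y = x-1 with x in [(k+1)n],
   phi(x) - 1 = (x-1) - floor((x-1)/(k+1)) if x < n(k+1), and phi(n(k+1)) - 1 = 0. *)
Definition phi0 (k n y : nat) : nat :=
  if y < (k.+1 * n).-1 then y - y %/ k.+1 else 0.

Definition phi_rel (k n : nat) (pi : {set {set 'I_(k.+1 * n)}}) : rel 'I_(k * n) :=
  fun x y => [exists V in pi, exists a in V, exists b in V,
                (phi0 k n a == x) && (phi0 k n b == y)].

(* f(pi): the finest partition of [kn] such that phi(V) lies in a single block for
   every V in pi, i.e. the partition into classes of the equivalence relation
   generated by phi_rel (reflexive-transitive closure of a symmetric relation). *)
Definition f_map (k n : nat) (pi : {set {set 'I_(k.+1 * n)}}) : {set {set 'I_(k * n)}} :=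
  equivalence_partition (connect (phi_rel pi)) [set: 'I_(k * n)].

Arguments NCup : clear implicits.
Arguments NClow : clear implicits.
Arguments f_map : clear implicits.

From mathcomp Require Import all_boot zify.
Set Implicit Arguments.
Unset Strict Implicit.
Unset Printing Implicit Defensive.

(* In a non-crossing partition whose block sizes are
   divisible by m (and m | N), the gap between consecutive points of a block is a union of
   blocks, so consecutive points of a block have consecutive residues mod m.  For
   pi in NC_{k+1}(n) every block therefore carries the residues 0, ..., k mod k+1 once each,
   in cyclic order, and phi glues its residue-k point to the next point of [(k+1)n].
   Forward: pulling f(pi) back along phi gives a non-crossing equivalence on [(k+1)n], and
   each block of pi meets the preimage of a block of f(pi) in 0 or k points of residue
   other than k, so f(pi) is in NC^k(n).
   Backward: the block of a in pi is the fibre of its end, the first point of residue k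
   met clockwise from a within its f(pi)-class.  This recovers pi from f(pi); and for Q in
   NC^k(n) the fibres of the same end map form a non-crossing partition with blocks of size
   at most k+1 and at most n blocks (one residue-k point each), hence in NC_{k+1}(n), whose
   image under f is Q. *)

Definition cdist (N a b : nat) := if a <= b then b - a else N + b - a.
Definition in_arc (N a b w : nat) := (0 < cdist N a w) && (cdist N a w < cdist N a b).
Definition csucc (N y : nat) := if y.+1 == N then 0 else y.+1.
Definition cpred (N y : nat) := if y == 0 then N - 1 else y - 1.
Definition on_arc (a w b : nat) := if a <= b then (a <= w) && (w <= b) else (a <= w) || (w <= b).

Ltac cyclic_lia := unfold in_arc, cdist, csucc, cpred, on_arc in *;
  repeat (match goal with
          | H : context[if _ then _ else _] |- _ => revert H
          | H : is_true (_ && _) |- _ => revert H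
          | H : (_ && _) = _ |- _ => revert H
          | |- context[if _ then _ else _] => case: ifP => ?
          end);
  repeat (let h := fresh "h" in intro h; try (case/andP: h => ??)); lia.

Lemma cdistnn N a : cdist N a a = 0.
Proof. by rewrite /cdist leqnn subnn. Qed.

Lemma cdist_lt N a b : a < N -> b < N -> cdist N a b < N.
Proof. move=> *; cyclic_lia. Qed.

Lemma cdist_inj N a b c : a < N -> b < N -> c < N -> cdist N a b = cdist N a c -> b = c.
Proof. move=> *; cyclic_lia. Qed.

Lemma cdist_injl N a b c : a < N -> b < N -> c < N -> cdist N a c = cdist N b c -> a = b.
Proof. move=> *; cyclic_lia. Qed.

Lemma cdist_eq0 N a b : a < N -> b < N -> (cdist N a b == 0) = (a == b).
Proof. move=> *; apply/eqP/eqP => *; cyclic_lia. Qed.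

Lemma cdist_gt0 N a b : a < N -> b < N -> (0 < cdist N a b) = (a != b).
Proof. by move=> *; rewrite lt0n cdist_eq0. Qed.

Lemma cdist_add N a b c : a < N -> b < N -> c < N ->
  cdist N a b + cdist N b c < N -> cdist N a c = cdist N a b + cdist N b c.
Proof. move=> *; cyclic_lia. Qed.

Lemma cdist_split N a b c : a < N -> b < N -> c < N -> cdist N a b <= cdist N a c ->
  cdist N a c = cdist N a b + cdist N b c.
Proof. move=> *; cyclic_lia. Qed.

Lemma modn_add_cdist N m a b : m %| N -> a < N -> b < N -> (a + cdist N a b) %% m = b %% m.
Proof.
move=> /dvdnP[q ->] la lb; rewrite /cdist; case: leqP => h; first by rewrite subnKC.
have -> : a + (q * m + b - a) = q * m + b by lia.
by rewrite modnMDl.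
Qed.

Lemma cdist_leE N a w b : a < N -> w < N -> b < N -> (cdist N a w <= cdist N a b) = on_arc a w b.
Proof.
move=> *; rewrite /on_arc; case: ifP => ?;
  case: (leqP a w) => ?; case: (leqP w b) => ?; cyclic_lia.
Qed.

Lemma in_arc_crossing N a b c c' : a < N -> b < N -> c < N -> c' < N -> c' != a -> c' != b ->
  in_arc N a b c -> ~~ in_arc N a b c' ->
  [|| [&& c' < a, a < c & c < b], [&& a < c, c < b & b < c'],
      [&& b < c', c' < a & a < c] | [&& c < b, b < c' & c' < a]].
Proof. move=> *; cyclic_lia. Qed.

Lemma in_arc_ltE N y z w : y < z -> z < N -> w < N -> in_arc N y z w = (y < w) && (w < z).
Proof. move=> *; case: (leqP y w) => ?; case: (leqP z w) => ?; cyclic_lia. Qed.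

Lemma cpred_csucc N y : y < N -> cpred N (csucc N y) = y.
Proof. move=> *; cyclic_lia. Qed.

Lemma csucc_cpred N y : 0 < N -> y < N -> csucc N (cpred N y) = y.
Proof. move=> *; cyclic_lia. Qed.

Lemma csucc_lt N y : y < N -> csucc N y < N.
Proof. move=> *; cyclic_lia. Qed.

Lemma cpred_lt N y : y < N -> cpred N y < N.
Proof. move=> *; cyclic_lia. Qed.

Lemma cdist_csucc N y : 1 < N -> y < N -> cdist N y (csucc N y) = 1.
Proof. move=> *; cyclic_lia. Qed.

Lemma cdist_cpred N y p : y < N -> p < N -> p != y -> cdist N y (cpred N p) = (cdist N y p).-1.
Proof. move=> *; cyclic_lia. Qed.

Lemma cdist_cpredr N y : 1 < N -> y < N -> cdist N y (cpred N y) = N - 1.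
Proof. move=> *; cyclic_lia. Qed.

Lemma in_arc_csucc N a u w : a < N -> u < N -> w < N -> in_arc N a u w -> csucc N w != u ->
  in_arc N a u (csucc N w).
Proof. move=> *; cyclic_lia. Qed.

Lemma in_arc_csuccV N a u w : a < N -> u < N -> w < N -> in_arc N a u (csucc N w) -> w != a ->
  in_arc N a u w.
Proof. move=> *; cyclic_lia. Qed.

Lemma in_arc_cdist_gt N a b w : a < N -> b < N -> w < N -> in_arc N b a w ->
  cdist N a b < cdist N a w /\ w != a.
Proof. move=> *; split; cyclic_lia. Qed.

Lemma cdist_lt_of_closer N y1 y2 e : y1 < N -> y2 < N -> e < N -> y2 != e ->
  cdist N y2 e < cdist N y1 e -> cdist N y1 y2 < cdist N y1 e.
Proof. move=> *; cyclic_lia. Qed.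

Lemma cdist_crossing N a b c d e1 e2 : a < b -> b < c -> c < d -> d < N -> e1 < N -> e2 < N ->
  e1 != e2 -> cdist N a e1 <= cdist N a e2 -> cdist N b e2 <= cdist N b e1 ->
  cdist N c e1 <= cdist N c e2 -> cdist N d e2 <= cdist N d e1 -> False.
Proof.
move=> ab bc cd dN e1N e2N e12.
have aN : a < N by lia. have bN : b < N by lia. have cN : c < N by lia.
rewrite !cdist_leE // /on_arc.
by case: (leqP a e2) => ?; case: (leqP b e1) => ?; case: (leqP c e2) => ?;
   case: (leqP d e1) => ? *; lia.
Qed.

Lemma card_ord_lt N D : D <= N -> #|[set j : 'I_N | j < D]| = D.
Proof.
elim: D => [|D IH] hD; first by apply/eqP; rewrite cards_eq0; apply/eqP/setP => j; rewrite !inE.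
have -> : [set j : 'I_N | j < D.+1] = Ordinal hD |: [set j : 'I_N | j < D].
  by apply/setP => j; rewrite !inE ltnS leq_eqVlt.
by rewrite cardsU1 IH ?(ltnW hD) // inE /= ltnn add1n.
Qed.

Lemma card_in_arc N (a b : 'I_N) : #|[set w : 'I_N | in_arc N a b w]| = (cdist N a b).-1.
Proof.
have la := ltn_ord a; have lb := ltn_ord b.
pose rot (w : 'I_N) := Ordinal (cdist_lt la (ltn_ord w)).
have rot_inj : injective rot.
  by move=> w1 w2 /(congr1 val) /(cdist_inj la (ltn_ord w1) (ltn_ord w2)) /val_inj.
have -> : [set w : 'I_N | in_arc N a b w] = rot @^-1: [set j : 'I_N | 0 < j < cdist N a b].
  by apply/setP => w; rewrite !inE.
rewrite card_preimset //.
have := card_ord_lt (ltnW (cdist_lt la lb)).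
rewrite (cardsD1 (Ordinal (leq_ltn_trans (leq0n a) la))) inE /=.
have -> : [set j : 'I_N | j < cdist N a b] :\ Ordinal (leq_ltn_trans (leq0n a) la) =
          [set j : 'I_N | 0 < j < cdist N a b].
  by apply/setP => -[[|j] hj]; rewrite !inE.
by case: (cdist N a b) => [|d] /=; lia.
Qed.

Section PartitionOfType.
Variables (T : finType) (P : {set {set T}}).
Hypothesis P_partition : partition P [set: T].

Lemma pblock_partition x : pblock P x \in P /\ x \in pblock P x.
Proof.
have x_cover : x \in cover P by rewrite (cover_partition P_partition) in_setT.
by rewrite pblock_mem // mem_pblock.
Qed.

Lemma pblock_partitionE B x : B \in P -> x \in B -> pblock P x = B.
Proof. by apply: def_pblock; case/and3P: P_partition. Qed.

Lemma block_eq A B x : A \in P -> B \in P -> x \in A -> x \in B -> A = B.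
Proof. by move=> AP BP xA xB; rewrite -(pblock_partitionE AP xA) (pblock_partitionE BP xB). Qed.

Lemma mem_pblock_partition x y : (y \in pblock P x) = (pblock P x == pblock P y).
Proof.
rewrite eq_pblock //; first by case/and3P: P_partition.
by rewrite (cover_partition P_partition) in_setT.
Qed.

End PartitionOfType.

Section NoncrossingDivisibleBlocks.
Variables (N m : nat) (P : {set {set 'I_N}}).
Hypothesis P_partition : partition P [set: 'I_N].
Hypothesis P_noncrossing : noncrossing P.
Hypothesis P_dvd : forall C, C \in P -> m %| #|C|.
Hypothesis m_dvd_N : m %| N.

Lemma noncrossing_in_arc V C (a b c c' : 'I_N) : V \in P -> C \in P -> C != V ->
  a \in V -> b \in V -> c \in C -> c' \in C -> in_arc N a b c -> in_arc N a b c'.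
Proof.
move=> VP CP CV aV bV cC c'C hc; apply/negPn/negP => hc'.
have VC : V != C by rewrite eq_sym.
have notV x : x \in V -> (c' : nat) != x.
  move=> xV; apply/eqP => /val_inj e; move/eqP: CV; apply.
  by apply: (block_eq P_partition CP VP c'C); rewrite e.
have := in_arc_crossing (ltn_ord a) (ltn_ord b) (ltn_ord c) (ltn_ord c') (notV _ aV) (notV _ bV).
move=> /(_ hc hc'); case/or4P => /and3P[h1 h2 h3].
- exact: (P_noncrossing CP VP CV h1 h2 h3).
- exact: (P_noncrossing VP CP VC h1 h2 h3).
- exact: (P_noncrossing VP CP VC h1 h2 h3).
- exact: (P_noncrossing CP VP CV h1 h2 h3).
Qed.

Lemma card_partition_meet (S : {set 'I_N}) : #|S| = \sum_(C in P) #|S :&: C|.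
Proof.
have tP : trivIset P by case/and3P: P_partition.
have -> : #|S| = \sum_(x in cover P) (if x \in S then 1 else 0).
  rewrite -sum1_card (cover_partition P_partition) big_mkcond [RHS]big_mkcond.
  by apply: eq_bigr => x _; rewrite in_setT.
rewrite (big_trivIset _ tP); apply: eq_bigr => C _.
rewrite -sum1_card big_mkcond /= [RHS]big_mkcond /=.
by apply: eq_bigr => x _; rewrite inE; case: (x \in S); case: (x \in C).
Qed.

Lemma dvdn_card_block_union (S : {set 'I_N}) :
  (forall C c c', C \in P -> c \in C -> c' \in C -> c \in S -> c' \in S) -> m %| #|S|.
Proof.
move=> closedS; rewrite card_partition_meet; apply: dvdn_sum => C CP.
have [noS | [x]] := set_0Vmem (S :&: C); first by rewrite noS cards0 dvdn0.
rewrite inE => /andP[xS xC].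
suff -> : S :&: C = C by apply: P_dvd.
by apply/setIidPr/subsetP => y yC; apply: closedS xC yC xS.
Qed.

Lemma dvdn_card_arc_gap V (a b : 'I_N) : V \in P -> a \in V -> b \in V ->
  m %| #|[set w : 'I_N | in_arc N a b w] :\: V|.
Proof.
move=> VP aV bV; apply: dvdn_card_block_union => C c c' CP cC c'C.
rewrite !inE => /andP[cV ca].
have CV : C != V by apply: contraNneq cV => <-.
rewrite (noncrossing_in_arc VP CP CV aV bV cC c'C ca) andbT.
by apply: contra CV => c'V; rewrite (block_eq P_partition CP VP c'C c'V).
Qed.

Lemma exists_block_next V (a : 'I_N) : V \in P -> a \in V -> 1 < #|V| ->
  exists u, [/\ u \in V, u != a & forall w, w \in V -> w != a -> cdist N a u <= cdist N a w].
Proof.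
move=> VP aV /card_gt1P[x [y [xV yV xy]]].
have [b bV ba] : exists2 b, b \in V & b != a.
  by case: (eqVneq x a) => [ex|]; [exists y; rewrite // -ex eq_sym | exists x].
case: (@arg_minnP _ b (fun u => (u \in V) && (u != a)) (fun u => cdist N a u)).
  by rewrite bV ba.
move=> u /andP[uV ua] min; exists u; split=> // w wV wa; apply: min; by rewrite wV wa.
Qed.

(* The gap between a and the next point u of its block is a union of blocks. *)
Lemma block_next_mod V (a u : 'I_N) : V \in P -> a \in V -> u \in V -> u != a ->
  (forall w, w \in V -> w != a -> cdist N a u <= cdist N a w) -> u %% m = a.+1 %% m.
Proof.
move=> VP aV uV ua min.
have gap_empty : [set w : 'I_N | in_arc N a u w] :&: V = set0.
  apply/setP => w; rewrite !inE; apply/negP => /andP[/andP[h1 h2] wV].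
  have wa : w != a by apply: contraTneq h1 => ->; rewrite cdistnn.
  by have := min w wV wa; rewrite leqNgt h2.
have := cardsID V [set w : 'I_N | in_arc N a u w].
rewrite gap_empty cards0 add0n card_in_arc => gap.
have /dvdnP[q gapq] := dvdn_card_arc_gap VP aV uV.
have du : 0 < cdist N a u by rewrite cdist_gt0 // eq_sym.
rewrite -(modn_add_cdist m_dvd_N (ltn_ord a) (ltn_ord u)).
rewrite gapq in gap.
have -> : a + cdist N a u = q * m + a.+1 by lia.
by rewrite modnMDl.
Qed.

Lemma block_mod_inj V (a b : 'I_N) : V \in P -> #|V| <= m -> a \in V -> b \in V ->
  a %% m = b %% m -> a = b.
Proof.
move=> VP Vm aV bV eab; apply/eqP/negPn/negP => ab.
have la := ltn_ord a; have lb := ltn_ord b.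
have d_gt0 : 0 < cdist N a b by rewrite cdist_gt0.
have /dvdnP[q2 d_eq] : m %| cdist N a b.
  have := modn_add_cdist m_dvd_N la lb; rewrite -eab => /eqP.
  by rewrite eqn_mod_dvd ?leq_addr // addKn.
clear eab.
set A := [set w : 'I_N | in_arc N a b w].
have small : #|A :&: V| + 2 <= m.
  apply: leq_trans Vm; have bVa : b \in V :\ a by rewrite !inE eq_sym ab bV.
  rewrite (cardsD1 a V) aV (cardsD1 b (V :\ a)) bVa addn2 !add1n !ltnS.
  apply: subset_leq_card; apply/subsetP => w; rewrite !inE => /andP[/andP[h1 h2] ->].
  rewrite andbT; apply/andP; split; first by apply: contraTneq h2 => ->; rewrite ltnn.
  by apply: contraTneq h1 => ->; rewrite cdistnn.
have /dvdnP[q gap_eq] := dvdn_card_arc_gap VP aV bV.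
have := cardsID V A; rewrite card_in_arc gap_eq; move: small; set C := #|A :&: V|.
case: (leqP q2 q) => h; first by have := leq_mul h (leqnn m); lia.
by have := leq_mul h (leqnn m); rewrite mulSn; lia.
Qed.

(* Residues increase by one along consecutive points of a block, so they wrap through 0. *)
Lemma block_mod0_in_arc B (x1 x2 : 'I_N) : B \in P -> 0 < m -> x1 \in B -> x2 \in B ->
  x1 != x2 -> x2 %% m <= x1 %% m ->
  exists w : 'I_N, [/\ w \in B, w %% m = 0, 0 < cdist N x1 w & cdist N x1 w <= cdist N x1 x2].
Proof.
move=> BP m_gt0; move: {2}(cdist N x1 x2) (leqnn (cdist N x1 x2)) => d.
elim: d x1 x2 => [|d IH] x1 x2 hd x1B x2B x12 hr.
  by move: hd; rewrite leqn0 cdist_eq0 ?ltn_ord // val_eqE (negbTE x12).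
have gt1 : 1 < #|B| by apply/card_gt1P; exists x1, x2.
have [u [uB ux1 min]] := exists_block_next BP x1B gt1.
have lx1 := ltn_ord x1; have lx2 := ltn_ord x2; have lu := ltn_ord u.
have du : 0 < cdist N x1 u by rewrite cdist_gt0 // eq_sym.
have du2 : cdist N x1 u <= cdist N x1 x2 by apply: min; rewrite // eq_sym.
have [u0 | u_ne0] := eqVneq (u %% m) 0; first by exists u.
have ur : u %% m = (x1 %% m).+1.
  by move: u_ne0; rewrite (block_next_mod BP x1B uB ux1 min) modnS; case: ifP.
have ux2 : u != x2 by apply: contraTneq hr => <-; rewrite ur ltnn.
have split2 := cdist_split lx1 lu lx2 du2.
have [||w [wB w0 dw dwu]] := IH u x2 _ uB x2B ux2; first by lia.
  by rewrite ur leqW.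
have d_lt := cdist_lt lx1 lx2.
exists w; split; rewrite // (cdist_add lx1 lu (ltn_ord w)); lia.
Qed.

End NoncrossingDivisibleBlocks.

(* psi k (q * k + r) = q * k.+1 + r for r < k: the section of phi0 that skips the points
   congruent to k mod k+1. *)
Definition psi (k x : nat) := x + x %/ k.

Lemma edivn_mulD q r d : r < d -> (q * d + r) %/ d = q /\ (q * d + r) %% d = r.
Proof.
move=> hr; have d_gt0 : 0 < d by case: d hr.
by rewrite divnMDl // divn_small // addn0 modnMDl modn_small.
Qed.

Lemma divn_modn_decomp y d : 0 < d ->
  exists q r, [/\ r < d, y = q * d + r, y %/ d = q & y %% d = r].
Proof. by move=> d_gt0; exists (y %/ d), (y %% d); rewrite ltn_pmod // -divn_eq. Qed.

Lemma ltn_psi k x x' : (psi k x < psi k x') = (x < x').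
Proof.
rewrite /psi; apply/idP/idP => h; last by have := @leq_div2r k x x' (ltnW h); lia.
by apply: contraTT h; rewrite -!leqNgt => h; have := @leq_div2r k x' x h; lia.
Qed.

Lemma leq_psi k x x' : (psi k x <= psi k x') = (x <= x').
Proof. by rewrite leqNgt ltn_psi -leqNgt. Qed.

Lemma psi_inj k : injective (psi k).
Proof. by move=> x x' e; apply/eqP; rewrite eqn_leq -(leq_psi k x) -(leq_psi k x') e leqnn. Qed.

Lemma psi_mod k x : 0 < k -> psi k x %% k.+1 = x %% k.
Proof.
move=> k_gt0; have [q [r [hr ex hq ->]]] := divn_modn_decomp x k_gt0.
rewrite /psi hq ex (_ : q * k + r + q = q * k.+1 + r); last by lia.
by have [_ ->] := edivn_mulD q (ltnW hr : r < k.+1).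
Qed.

Section PhiPsi.
Variables k n : nat.
Hypothesis k_gt0 : 0 < k.
Hypothesis n_gt0 : 0 < n.
Local Notation N := (k.+1 * n).
Local Notation M := (k * n).

Lemma N_gt1 : 1 < N.
Proof. nia. Qed.

Lemma phi0_lt y : y < N -> phi0 k n y < M.
Proof.
move=> hy; rewrite /phi0; case: ifP => h; last by nia.
have [q [r [hr ey -> _]]] := divn_modn_decomp y (ltn0Sn k); subst y.
have qn : q < n by nia.
nia.
Qed.

Lemma psi_lt x : x < M -> psi k x < N.-1.
Proof.
move=> hx; have [q [r [hr ex hq _]]] := divn_modn_decomp x k_gt0.
have qn : q < n by nia.
rewrite /psi hq ex; nia.
Qed.

Lemma psi_ltN x : x < M -> psi k x < N.
Proof. by move/psi_lt; lia. Qed.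

Lemma psiK x : x < M -> phi0 k n (psi k x) = x.
Proof.
move=> hx; have [q [r [hr ex hq _]]] := divn_modn_decomp x k_gt0.
rewrite /phi0 psi_lt // /psi hq ex (_ : q * k + r + q = q * k.+1 + r); last by lia.
by have [-> _] := edivn_mulD q (ltnW hr : r < k.+1); lia.
Qed.

Lemma phi0K y : y < N -> y %% k.+1 != k -> psi k (phi0 k n y) = y.
Proof.
move=> hy; have [q [r [hr ey hq ->]]] := divn_modn_decomp y (ltn0Sn k) => rk.
have rk' : r < k by lia.
have qn : q < n by nia.
have lt : y < N.-1 by nia.
rewrite /phi0 lt hq ey mulnSr (_ : q * k + q + r - q = q * k + r); last by lia.
by rewrite /psi; have [-> _] := edivn_mulD q rk'; lia.
Qed.

Lemma psi_cdist x w x2 : x < M -> w < M -> x2 < M ->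
  cdist M x w <= cdist M x x2 -> cdist N (psi k x) (psi k w) <= cdist N (psi k x) (psi k x2).
Proof.
by move=> hx hw hx2; rewrite !cdist_leE ?psi_ltN // /on_arc !leq_psi.
Qed.

Lemma phi0_csucc y : y < N -> y %% k.+1 = k ->
  csucc N y %% k.+1 = 0 /\ phi0 k n (csucc N y) = phi0 k n y.
Proof.
move=> hy; have [q [r [hr ey hq ->]]] := divn_modn_decomp y (ltn0Sn k) => rk; subst r.
have qn : q < n by nia.
rewrite /csucc; case: ifP => [/eqP e|ne].
  rewrite mod0n /phi0 (_ : y < N.-1 = false); last by lia.
  by case: ifP; rewrite ?div0n.
have qn1 : q.+1 < n.
  rewrite ltn_neqAle qn andbT; apply: contraFneq ne => e.
  by rewrite ey -e; apply/eqP; rewrite mulnC mulSn; lia.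
have [d1 m1] := edivn_mulD q.+1 (ltn0Sn k).
rewrite (_ : y.+1 = q.+1 * k.+1 + 0); last by nia.
rewrite m1 /phi0 (_ : _ < N.-1); last by nia.
rewrite (_ : y < N.-1); last by nia.
rewrite d1 hq; split=> //; nia.
Qed.

Lemma phi0_fiber a b : a < N -> b < N -> phi0 k n a = phi0 k n b ->
  [\/ a = b, a %% k.+1 = k /\ b = csucc N a | b %% k.+1 = k /\ a = csucc N b].
Proof.
move=> ha hb e.
have k_ne0 : 0 != k by rewrite eq_sym -lt0n.
have glued y : y < N -> y %% k.+1 = k -> psi k (phi0 k n y) = csucc N y.
  move=> hy ry; have [r0 <-] := phi0_csucc hy ry.
  by rewrite phi0K ?csucc_lt // r0.
have [ra | ra] := eqVneq (a %% k.+1) k; have [rb | rb] := eqVneq (b %% k.+1) k.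
- by constructor 1; rewrite -[a](cpred_csucc ha) -[b](cpred_csucc hb) -!glued // e.
- by constructor 2; rewrite -(phi0K hb rb) -e glued.
- by constructor 3; rewrite -(phi0K ha ra) e glued.
- by constructor 1; rewrite -(phi0K ha ra) -(phi0K hb rb) e.
Qed.

Lemma phi0_modk z : z < N -> z %% k.+1 = k -> phi0 k n z %% k = 0.
Proof.
move=> hz rz; have [r0 <-] := phi0_csucc hz rz.
by rewrite -(psi_mod _ k_gt0) phi0K ?csucc_lt // r0 eq_sym -lt0n.
Qed.

Lemma cpred_psi_phi0 z : z < N -> z %% k.+1 = k -> cpred N (psi k (phi0 k n z)) = z.
Proof.
move=> hz rz; have [r0 <-] := phi0_csucc hz rz.
by rewrite phi0K ?csucc_lt ?cpred_csucc // r0 eq_sym -lt0n.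
Qed.

Lemma cpred_psi_mod w : w < M -> w %% k = 0 -> cpred N (psi k w) %% k.+1 = k.
Proof.
move=> hw w0; have := psi_mod w k_gt0; rewrite w0.
have [q [r [hr ey _ ->]]] := divn_modn_decomp (psi k w) (ltn0Sn k) => r0; subst r.
rewrite /cpred; case: ifP => [/eqP y0 | /negbT y_ne0].
  rewrite (_ : N - 1 = n.-1 * k.+1 + k); last by nia.
  by have [_ ->] := edivn_mulD n.-1 (ltnSn k).
have q_gt0 : 0 < q by apply: contraNltn y_ne0 => q0; rewrite ey; nia.
rewrite ey (_ : q * k.+1 + 0 - 1 = q.-1 * k.+1 + k); last by nia.
by have [_ ->] := edivn_mulD q.-1 (ltnSn k).
Qed.

Lemma phi0_cpred_psi w : w < M -> w %% k = 0 -> phi0 k n (cpred N (psi k w)) = w.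
Proof.
move=> hw w0; have hy := psi_ltN hw.
have [_ <-] := phi0_csucc (cpred_lt hy) (cpred_psi_mod hw w0).
by rewrite csucc_cpred ?psiK //; lia.
Qed.

Lemma phi0_last : phi0 k n N.-1 = 0.
Proof. by rewrite /phi0 ltnn. Qed.

Lemma leq_phi0 a b : a <= b -> b < N.-1 -> phi0 k n a <= phi0 k n b.
Proof.
move=> ab hb; rewrite /phi0 hb (leq_ltn_trans ab hb).
have := leq_div2r k.+1 ab.
have [qa [ra [hra ea -> _]]] := divn_modn_decomp a (ltn0Sn k).
have [qb [rb [hrb eb -> _]]] := divn_modn_decomp b (ltn0Sn k).
by nia.
Qed.

Definition phi_ord (y : 'I_N) : 'I_M := Ordinal (phi0_lt (ltn_ord y)).

Definition psi_ord (x : 'I_M) : 'I_N := Ordinal (psi_ltN (ltn_ord x)).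

Lemma psi_ordK : cancel psi_ord phi_ord.
Proof. by move=> x; apply: val_inj; rewrite /= psiK. Qed.

Lemma psi_ord_inj : injective psi_ord.
Proof. exact: can_inj psi_ordK. Qed.

End PhiPsi.

(* The first point clockwise from a (a itself included) that is congruent to k mod k+1
   and related to a by th; defaults to a when there is none. *)
Definition endpt (k N : nat) (th : rel 'I_N) (a : 'I_N) : 'I_N :=
  odflt a [pick z | th a z && (z %% k.+1 == k) &&
     [forall z', th a z' && (z' %% k.+1 == k) ==> (cdist N a z <= cdist N a z')]].

Lemma endpt_eq k N (th : rel 'I_N) a e : th a e -> e %% k.+1 = k ->
  (forall z, th a z -> z %% k.+1 = k -> cdist N a e <= cdist N a z) -> endpt k th a = e.
Proof.
move=> he re min; rewrite /endpt; case: pickP => [z /andP[/andP[hz /eqP rz] /forallP mz]|none] /=.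
  apply: val_inj; apply: (cdist_inj (ltn_ord a) (ltn_ord z) (ltn_ord e)).
  apply/eqP; rewrite eqn_leq (min z hz rz) andbT.
  by move: (mz e); rewrite he re eqxx.
have := none e; rewrite he re eqxx /= => /negbT/forallPn[z].
by rewrite negb_imply => /andP[/andP[hz /eqP rz]]; rewrite (min z hz rz).
Qed.

Lemma eq_endpt k N (th1 th2 : rel 'I_N) : th1 =2 th2 -> endpt k th1 =1 endpt k th2.
Proof.
move=> eq_th a; rewrite /endpt; congr odflt; apply: eq_pick => z /=; rewrite eq_th.
by congr (_ && _); apply: eq_forallb => z'; rewrite eq_th.
Qed.

Lemma eq_equivalence_partition (T : finType) (R R' : rel T) (D : {set T}) :
  R =2 R' -> equivalence_partition R D = equivalence_partition R' D.
Proof.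
move=> eqR; rewrite /equivalence_partition; apply: eq_imset => x.
by apply/setP => y; rewrite !inE eqR.
Qed.

Section Forward.
Variables (k n : nat).
Hypothesis k_gt0 : 0 < k.
Hypothesis n_gt0 : 0 < n.
Local Notation N := (k.+1 * n).
Local Notation M := (k * n).
Local Notation phi_ord := (phi_ord k_gt0 n_gt0).
Local Notation psi_ord := (psi_ord k_gt0 n_gt0).
Variable pi : {set {set 'I_N}}.
Hypothesis pi_NClow : NClow k n pi.

Let pi_partition : partition pi [set: 'I_N]. Proof. by case: pi_NClow. Qed.
Let pi_noncrossing : noncrossing pi. Proof. by case: pi_NClow => _ []. Qed.
Let card_pi V : V \in pi -> #|V| = k.+1. Proof. by case: pi_NClow => _ [] _; apply. Qed.
Let dvdn_card_pi V : V \in pi -> k.+1 %| #|V|. Proof. by move/card_pi ->. Qed.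
Let dvdn_N : k.+1 %| N. Proof. exact: dvdn_mulr. Qed.

Lemma pi_mod_inj V (a b : 'I_N) : V \in pi -> a \in V -> b \in V ->
  a %% k.+1 = b %% k.+1 -> a = b.
Proof.
move=> VP; apply: (block_mod_inj pi_partition pi_noncrossing dvdn_card_pi dvdn_N VP).
by rewrite card_pi.
Qed.

Lemma pi_block_mod_surj V r : V \in pi -> r < k.+1 -> exists2 e, e \in V & e %% k.+1 = r.
Proof.
move=> VP hr.
pose f (y : 'I_N) : 'I_k.+1 := inord (y %% k.+1).
have f_inj : {in V &, injective f}.
  move=> a b aV bV /(congr1 val); rewrite /= !inordK ?ltn_pmod //.
  exact: pi_mod_inj VP aV bV.
have cf : #|f @: V| = k.+1 by rewrite card_in_imset // card_pi.
have : f @: V = setT by apply/eqP; rewrite eqEcard subsetT /= cf cardsT card_ord.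
move=> fV; have : (inord r : 'I_k.+1) \in f @: V by rewrite fV in_setT.
case/imsetP=> e eV /(congr1 val); rewrite /= !inordK ?ltn_pmod // => er.
by exists e.
Qed.

Local Notation R := (phi_rel pi).

Lemma phi_rel_sym : symmetric R.
Proof.
suff h x y : R x y -> R y x by move=> x y; apply/idP/idP; apply: h.
case/existsP=> V /andP[VP /existsP[a /andP[aV /existsP[b /andP[bV /andP[ha hb]]]]]].
apply/existsP; exists V; rewrite VP; apply/existsP; exists b; rewrite bV.
by apply/existsP; exists a; rewrite aV ha hb.
Qed.

Definition same_fblock (a b : 'I_N) := connect R (phi_ord a) (phi_ord b).

Lemma same_fblock_sym a b : same_fblock a b = same_fblock b a.
Proof. exact: (sym_connect_sym phi_rel_sym). Qed.

Lemma same_fblock_trans b a c : same_fblock a b -> same_fblock b c -> same_fblock a c.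
Proof. exact: connect_trans. Qed.

Lemma same_fblock_refl a : same_fblock a a.
Proof. exact: connect0. Qed.

Lemma same_fblock_pi V (a b : 'I_N) : V \in pi -> a \in V -> b \in V -> same_fblock a b.
Proof.
move=> VP aV bV; apply: connect1; apply/existsP; exists V; rewrite VP.
by apply/existsP; exists a; rewrite aV; apply/existsP; exists b; rewrite bV !eqxx.
Qed.

Lemma same_fblock_phi0 (a b : 'I_N) : phi0 k n a = phi0 k n b -> same_fblock a b.
Proof.
by move=> e; rewrite /same_fblock (_ : phi_ord a = phi_ord b) ?connect0 //; apply: val_inj.
Qed.

(* same_fblock is the equivalence generated by the blocks of pi and the fibres of phi0. *)
Lemma same_fblock_closed (S : {set 'I_N}) :
  (forall V (a b : 'I_N), V \in pi -> a \in V -> b \in V -> a \in S -> b \in S) ->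
  (forall a b : 'I_N, phi0 k n a = phi0 k n b -> a \in S -> b \in S) ->
  forall a b, same_fblock a b -> a \in S -> b \in S.
Proof.
move=> closed_pi closed_phi a b hab aS.
pose T := [set x : 'I_M | [exists a in S, phi_ord a == x]].
have memT (c : 'I_N) : (phi_ord c \in T) = (c \in S).
  rewrite inE; apply/existsP/idP => [[c' /andP[c'S /eqP e]] | cS].
    by apply: (closed_phi c' c) => //; move/(congr1 val): e.
  by exists c; rewrite cS eqxx.
have closedT : closed R T.
  move=> x y /existsP[V /andP[VP /existsP[c /andP[cV]]]].
  case/existsP=> d /andP[dV /andP[/eqP hc /eqP hd]].
  have -> : x = phi_ord c by apply: val_inj.
  have -> : y = phi_ord d by apply: val_inj.
  by rewrite !memT; apply/idP/idP; [exact: closed_pi VP cV dV | exact: closed_pi VP dV cV].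
by have := closed_connect closedT hab; rewrite !memT aS => /esym.
Qed.

Lemma pi_next (a : 'I_N) : a %% k.+1 != k -> exists u : 'I_N,
  [/\ u \in pblock pi a, u != a,
      forall w, w \in pblock pi a -> w != a -> cdist N a u <= cdist N a w,
      u %% k.+1 = (a %% k.+1).+1 &
      forall w z : 'I_N, in_arc N a u w -> same_fblock w z -> in_arc N a u z].
Proof.
move=> ra; have [VP aV] := pblock_partition pi_partition a; set V := pblock pi a in VP aV *.
have gt1 : 1 < #|V| by rewrite card_pi.
have [u [uV ua min]] := exists_block_next VP aV gt1.
have ur : u %% k.+1 = (a %% k.+1).+1.
  rewrite (block_next_mod pi_partition pi_noncrossing dvdn_card_pi dvdn_N VP aV uV ua min).
  have ar : (a %% k.+1).+1 < k.+1 by rewrite ltnS ltn_neqAle ra -ltnS ltn_pmod.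
  by rewrite -[a.+1]addn1 -modnDml addn1 modn_small.
exists u; split=> // w z hw hwz.
have := @same_fblock_closed [set w0 : 'I_N | in_arc N a u w0] _ _ w z hwz.
rewrite !inE; apply=> //.
- move=> V' c c' V'P cV' c'V'; rewrite !inE => hc.
  have [eV' | neV'] := eqVneq V' V.
    2: exact: noncrossing_in_arc VP V'P neV' aV uV cV' c'V' hc.
  have ca : c != a by apply: contraTneq hc => ->; rewrite /in_arc cdistnn.
  have cV : c \in V by rewrite -eV'.
  move: hc (min c cV ca); rewrite /in_arc => /andP[_ h1] h2.
  by have := leq_ltn_trans h2 h1; rewrite ltnn.
- move=> c c' e; rewrite !inE => hc.
  have [/val_inj <- // | [rc ->] | [rc' e1]] := phi0_fiber k_gt0 n_gt0 (ltn_ord c) (ltn_ord c') e.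
    have [r0 _] := phi0_csucc k_gt0 n_gt0 (ltn_ord c) rc.
    by apply: in_arc_csucc => //; apply/eqP => e2; move: r0; rewrite e2 ur.
  rewrite e1 in hc; apply: in_arc_csuccV hc _ => //.
  by apply/eqP => e2; move: ra; rewrite -e2 rc' eqxx.
Qed.

(* A related point z of residue k before e would lie in the gap after the last point u of
   the block before z, and that gap is a union of classes not containing u's. *)
Lemma pi_end (a : 'I_N) : exists e : 'I_N, [/\ e \in pblock pi a, e %% k.+1 = k &
  forall z, same_fblock a z -> z %% k.+1 = k -> cdist N a e <= cdist N a z].
Proof.
have [VP aV] := pblock_partition pi_partition a; set V := pblock pi a in VP aV *.
have [e eV re] := pi_block_mod_surj VP (ltnSn k).
exists e; split=> // z haz rz; rewrite leqNgt; apply/negP => hz.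
pose P u := (u \in V) && (cdist N a u <= cdist N a z).
case: (@arg_maxnP _ a P (fun u => cdist N a u)); first by rewrite /P aV cdistnn.
move=> u /andP[uV duz] maxu.
have la := ltn_ord a; have lu := ltn_ord u; have lz := ltn_ord z.
have [euz | uz] := eqVneq u z.
  have zV : z \in V by rewrite -euz.
  have ze : z = e by apply: pi_mod_inj VP zV eV _; rewrite rz re.
  by move: hz; rewrite ze ltnn.
have duz' : cdist N a u < cdist N a z.
  rewrite ltn_neqAle duz andbT; apply: contra uz => /eqP h.
  by apply/eqP/val_inj/(cdist_inj la lu lz h).
have ru : u %% k.+1 != k.
  apply/eqP => ru; move: hz; rewrite -(pi_mod_inj VP uV eV (etrans ru (esym re))) => hz.
  by have := ltn_trans hz duz'; rewrite ltnn.
have [u' [u'V u'u minu' ru' closed_gap]] := pi_next ru.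
rewrite (pblock_partitionE pi_partition VP uV) in u'V.
have lu' := ltn_ord u'.
have [h | h] := leqP (cdist N u u') (cdist N u z).
  have le : cdist N a u + cdist N u u' <= cdist N a z.
    by rewrite (cdist_split la lu lz duz) leq_add2l.
  have du' : cdist N a u' = cdist N a u + cdist N u u'.
    by apply: cdist_add => //; apply: leq_ltn_trans le (cdist_lt la lz).
  have dpos : 0 < cdist N u u' by rewrite cdist_gt0 // eq_sym.
  have := maxu u'; rewrite /P u'V du' le => /(_ isT).
  by move: dpos; clear; lia.
have hin : in_arc N u u' z by rewrite /in_arc h andbT cdist_gt0.
have hzu : same_fblock z u.
  by apply: (@same_fblock_trans a); [rewrite same_fblock_sym | exact: same_fblock_pi VP aV uV].
by have := closed_gap z u hin hzu; rewrite /in_arc cdistnn.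
Qed.

Lemma pi_endpt (a : 'I_N) :
  endpt k same_fblock a \in pblock pi a /\ endpt k same_fblock a %% k.+1 = k.
Proof.
have [e [eV re min]] := pi_end a; have [VP aV] := pblock_partition pi_partition a.
by rewrite (endpt_eq (same_fblock_pi VP aV eV) re min).
Qed.

Lemma pi_preim_endpt : pi = preim_partition (endpt k same_fblock) [set: 'I_N].
Proof.
rewrite -{1}(equivalence_partition_pblock pi_partition).
apply: eq_equivalence_partition => a b.
have [ea ra] := pi_endpt a; have [eb rb] := pi_endpt b.
have [Va aV] := pblock_partition pi_partition a; have [Vb bV] := pblock_partition pi_partition b.
apply/idP/eqP => [bVa | e].
  rewrite (pblock_partitionE pi_partition Va bVa) in eb.
  by apply: (pi_mod_inj Va ea eb); rewrite ra rb.
by rewrite -(pblock_partitionE pi_partition Va ea) e (pblock_partitionE pi_partition Vb eb).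
Qed.

(* Either y is glued to its successor and the arc is empty, or z is the next point of the
   block of y. *)
Lemma same_fblock_gap (y z : 'I_N) : y != z -> same_fblock y z ->
  (forall w : 'I_N, in_arc N y z w -> ~~ same_fblock y w) ->
  forall w w' : 'I_N, in_arc N y z w -> same_fblock w w' -> in_arc N y z w'.
Proof.
move=> yz hyz no_rel w w' hw hww'.
have ly := ltn_ord y; have lz := ltn_ord z; have lw := ltn_ord w.
have [ry | ry] := eqVneq (y %% k.+1) k.
  have [_ pe] := phi0_csucc k_gt0 n_gt0 ly ry.
  pose s := Ordinal (csucc_lt ly).
  have hys : same_fblock y s by apply: same_fblock_phi0; rewrite /= pe.
  have d1 : cdist N y s = 1 by apply: cdist_csucc => //; apply: N_gt1.
  have [h | h] := leqP (cdist N y z) 1; first by move: hw; rewrite /in_arc; lia.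
  by have := no_rel s; rewrite hys /in_arc d1 h => /(_ isT).
have [u [uV uy minu ru closed_gap]] := pi_next ry.
have [Vy yV] := pblock_partition pi_partition y.
have hyu := same_fblock_pi Vy yV uV.
have lu := ltn_ord u.
suff zu : z = u by rewrite zu in hw *; apply: closed_gap hw hww'.
apply: val_inj; apply: (cdist_inj ly lz lu).
case: (ltngtP (cdist N y z) (cdist N y u)) => // h.
  have hin : in_arc N y u z by rewrite /in_arc h andbT cdist_gt0.
  by have := closed_gap z y hin; rewrite same_fblock_sym /in_arc cdistnn => /(_ hyz).
have hin : in_arc N y z u by rewrite /in_arc h andbT cdist_gt0 // eq_sym.
by have := no_rel u hin; rewrite hyu.
Qed.

(* With y the last point before b related to a and z the first related point after y, the
   arc (y, z) contains b but no point related to y, so it also contains d. *)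
Lemma same_fblock_noncrossing (a b c d : 'I_N) : a < b -> b < c -> c < d ->
  same_fblock a c -> same_fblock b d -> same_fblock a b.
Proof.
move=> ab bc cd hac hbd; apply/negPn/negP => hab.
case: (@arg_maxnP _ a (fun y : 'I_N => (y < b) && same_fblock a y) val).
  by rewrite ab same_fblock_refl.
move=> y /andP[yb hay] maxy.
case: (@arg_minnP _ c (fun z : 'I_N => (y < z) && same_fblock a z) val).
  by rewrite hac andbT (ltn_trans yb bc).
move=> z /andP[yz haz] minz.
have zc : z <= c by apply: minz; rewrite hac andbT (ltn_trans yb bc).
have bz : b < z.
  case: (ltngtP b z) => // h; last by move: hab; rewrite (val_inj h) haz.
  by have := maxy z; rewrite h haz => /(_ isT) /(leq_trans yz); rewrite ltnn.
have lz := ltn_ord z.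
have yz' : y != z by apply: contraTneq yz => ->; rewrite ltnn.
have hyz : same_fblock y z by apply: (@same_fblock_trans a) haz; rewrite same_fblock_sym.
have no_rel (w : 'I_N) : in_arc N y z w -> ~~ same_fblock y w.
  rewrite in_arc_ltE // => /andP[h1 h2]; apply/negP => hyw.
  by have := minz w; rewrite h1 (same_fblock_trans hay hyw) leqNgt h2 => /(_ isT).
have hb : in_arc N y z b by rewrite in_arc_ltE // yb.
have := same_fblock_gap yz' hyz no_rel hb hbd; rewrite in_arc_ltE // => /andP[_ dz].
by have := ltn_trans (leq_ltn_trans zc cd) dz; rewrite ltnn.
Qed.

Local Notation fpi := (f_map k n pi).

Lemma connect_phi_rel_equiv : {in [set: 'I_M] & &, equivalence_rel (connect R)}.
Proof.
move=> x y z _ _ _; split; first exact: connect0.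
move=> exy; apply/idP/idP => [h|]; last exact: connect_trans.
by apply: connect_trans h; rewrite (sym_connect_sym phi_rel_sym).
Qed.

Lemma f_partition : partition fpi [set: 'I_M].
Proof. exact: equivalence_partitionP connect_phi_rel_equiv. Qed.

Lemma mem_pblock_f (x y : 'I_M) : (y \in pblock fpi x) = connect R x y.
Proof. by rewrite (pblock_equivalence_partition connect_phi_rel_equiv) ?in_setT. Qed.

Lemma same_fblockE (a b : 'I_N) : same_fblock a b = (phi_ord b \in pblock fpi (phi_ord a)).
Proof. by rewrite mem_pblock_f. Qed.

Lemma f_noncrossing : noncrossing fpi.
Proof.
move=> x1 x2 x3 x4 A B AF BF AB h12 h23 h34 x1A x3A x2B x4B.
have tF : trivIset fpi by case/and3P: f_partition.
have same_f (x x' : 'I_M) C :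
    C \in fpi -> x \in C -> x' \in C -> same_fblock (psi_ord x) (psi_ord x').
  by move=> CF xC x'C; rewrite same_fblockE !psi_ordK (def_pblock tF CF xC).
have := same_fblock_noncrossing _ _ _ (same_f _ _ _ AF x1A x3A) (same_f _ _ _ BF x2B x4B).
rewrite !ltn_psi same_fblockE !psi_ordK (def_pblock tF AF x1A) => /(_ h12 h23 h34) x2A.
by rewrite (block_eq f_partition AF BF x2A x2B) eqxx in AB.
Qed.

(* Through psi, a block of f(pi) is the set of points of residue other than k in a union of
   blocks of pi; each of these blocks contributes exactly k points. *)
Lemma dvdn_card_fblock A : A \in fpi -> k %| #|A|.
Proof.
case/imsetP => x0 _ ->; set A0 := [set y in [set: 'I_M] | connect R x0 y].
set S := [set y : 'I_N | (y %% k.+1 != k) && same_fblock (psi_ord x0) y].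
rewrite -(card_imset _ (@psi_ord_inj _ _ k_gt0 n_gt0)).
have -> : psi_ord @: A0 = S.
  apply/setP => y; rewrite [in RHS]inE; apply/imsetP/idP => [[x xA ->]|/andP[ry hy]].
    rewrite /= (psi_mod _ k_gt0) ltn_eqF ?ltn_pmod // /same_fblock !psi_ordK.
    by move: xA; rewrite /A0 !inE.
  exists (phi_ord y); first by move: hy; rewrite /A0 !inE /same_fblock psi_ordK.
  by apply: val_inj; rewrite /= phi0K.
rewrite (card_partition_meet pi_partition); apply: dvdn_sum => V VP.
have [-> | [y]] := set_0Vmem (S :&: V); first by rewrite cards0 dvdn0.
rewrite !inE => /andP[/andP[_ hy] yV].
have [e eV re] := pi_block_mod_surj VP (ltnSn k).
have -> : S :&: V = V :\ e.
  apply/setP => v; rewrite !inE; have [vV | _] := boolP (v \in V); rewrite ?andbF ?andbT //.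
  rewrite (same_fblock_trans hy (same_fblock_pi VP yV vV)) andbT.
  apply/idP/idP => [rv | ve]; first by apply: contra rv => /eqP ->; rewrite re.
  by apply: contra ve => /eqP rv; apply/eqP/(pi_mod_inj VP vV eV); rewrite rv re.
by have := cardsD1 e V; rewrite eV card_pi // add1n => -[<-].
Qed.

Lemma f_NCup : NCup k n fpi.
Proof.
by split; [exact: f_partition | split; [exact: f_noncrossing | exact: dvdn_card_fblock]].
Qed.

End Forward.

Section Backward.
Variables (k n : nat).
Hypothesis k_gt0 : 0 < k.
Hypothesis n_gt0 : 0 < n.
Local Notation N := (k.+1 * n).
Local Notation M := (k * n).
Local Notation phi_ord := (phi_ord k_gt0 n_gt0).
Local Notation psi_ord := (psi_ord k_gt0 n_gt0).
Variable Q : {set {set 'I_M}}.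
Hypothesis Q_NCup : NCup k n Q.

Let Q_partition : partition Q [set: 'I_M]. Proof. by case: Q_NCup. Qed.
Let Q_noncrossing : noncrossing Q. Proof. by case: Q_NCup => _ []. Qed.
Let dvdn_card_Q B : B \in Q -> k %| #|B|. Proof. by case: Q_NCup => _ [] _; apply. Qed.
Let dvdn_M : k %| M. Proof. exact: dvdn_mulr. Qed.

(* Take x2 the point of B just before x: x's residue follows x2's, so unless x is already
   0 mod k, going around from x back to x2 passes through residue 0. *)
Lemma Q_block_mod0 (x : 'I_M) : exists2 w : 'I_M, w \in pblock Q x & w %% k = 0.
Proof.
have [BQ xB] := pblock_partition Q_partition x; set B := pblock Q x in BQ xB *.
have [x0 | x_ne0] := eqVneq (x %% k) 0; first by exists x.
have k_gt1 : 1 < k.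
  rewrite ltn_neqAle k_gt0 andbT; apply: contraNneq x_ne0 => k1.
  by move: (x : nat) => x'; rewrite -k1 modn1.
have gt1 : 1 < #|B|.
  by apply: leq_trans k_gt1 (dvdn_leq _ (dvdn_card_Q BQ)); apply/card_gt0P; exists x.
have [x' [x'B x'x _]] := exists_block_next BQ xB gt1.
case: (@arg_maxnP _ x' (fun u => (u \in B) && (u != x)) (fun u => cdist M x u)).
  by rewrite x'B x'x.
move=> x2 /andP[x2B x2x] maxx2.
have lx := ltn_ord x; have lx2 := ltn_ord x2.
have x_next : forall w, w \in B -> w != x2 -> cdist M x2 x <= cdist M x2 w.
  move=> w wB wx2; rewrite leqNgt; apply/negP => h.
  have hw : in_arc M x2 x w by rewrite /in_arc h andbT cdist_gt0 ?ltn_ord // eq_sym.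
  have [h1 h2] := in_arc_cdist_gt lx lx2 (ltn_ord w) hw.
  by have := maxx2 w; rewrite wB h2 => /(_ isT) /(leq_trans h1); rewrite ltnn.
have xx2 : x != x2 by rewrite eq_sym.
have xr := block_next_mod Q_partition Q_noncrossing dvdn_card_Q dvdn_M BQ x2B xB xx2 x_next.
have x2r : x2 %% k <= x %% k.
  have := ltn_pmod x2 k_gt0; rewrite leq_eqVlt => /orP[/eqP e | lt].
    by move: x_ne0; rewrite xr -addn1 -modnDml addn1 e modnn eqxx.
  by rewrite xr -addn1 -modnDml addn1 (modn_small lt).
have [w [wB w0 _ _]] :=
  block_mod0_in_arc Q_partition Q_noncrossing dvdn_card_Q dvdn_M BQ k_gt0 xB x2B xx2 x2r.
by exists w.
Qed.

Definition same_Qblock (a b : 'I_N) := phi_ord b \in pblock Q (phi_ord a).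

Lemma same_QblockE a b : same_Qblock a b = (pblock Q (phi_ord a) == pblock Q (phi_ord b)).
Proof. exact: mem_pblock_partition. Qed.

Lemma same_Qblock_refl a : same_Qblock a a.
Proof. by rewrite same_QblockE. Qed.

Lemma same_Qblock_sym a b : same_Qblock a b = same_Qblock b a.
Proof. by rewrite !same_QblockE eq_sym. Qed.

Lemma same_Qblock_trans b a c : same_Qblock a b -> same_Qblock b c -> same_Qblock a c.
Proof. by rewrite !same_QblockE => /eqP ->. Qed.

Lemma same_Qblock_end_exists (a : 'I_N) : exists z : 'I_N, same_Qblock a z /\ z %% k.+1 = k.
Proof.
have [w wB w0] := Q_block_mod0 (phi_ord a).
pose z := Ordinal (cpred_lt (psi_ltN k_gt0 n_gt0 (ltn_ord w))).
have wz : w = phi_ord z by apply: val_inj; rewrite /= phi0_cpred_psi.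
by exists z; rewrite /same_Qblock -wz /= cpred_psi_mod.
Qed.

Local Notation endQ := (endpt k same_Qblock).

Lemma endQ_spec a : [/\ same_Qblock a (endQ a), endQ a %% k.+1 = k &
  forall z, same_Qblock a z -> z %% k.+1 = k -> cdist N a (endQ a) <= cdist N a z].
Proof.
have [z0 [h0 r0]] := same_Qblock_end_exists a.
case: (@arg_minnP _ z0 (fun z => same_Qblock a z && (z %% k.+1 == k)) (fun z => cdist N a z)).
  by rewrite h0 r0 eqxx.
move=> e /andP[he /eqP re] mine.
have min z : same_Qblock a z -> z %% k.+1 = k -> cdist N a e <= cdist N a z.
  by move=> hz rz; apply: mine; rewrite hz rz eqxx.
by rewrite (endpt_eq he re min).
Qed.

Lemma endQ_id (z : 'I_N) : z %% k.+1 = k -> endQ z = z.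
Proof. by move=> rz; apply: (endpt_eq (same_Qblock_refl z) rz) => y _ _; rewrite cdistnn. Qed.

Lemma same_Qblock_endQ a b : endQ a = endQ b -> same_Qblock a b.
Proof.
move=> e; have [ha _ _] := endQ_spec a; have [hb _ _] := endQ_spec b.
by apply: same_Qblock_trans ha _; rewrite e same_Qblock_sym.
Qed.

Definition piQ := preim_partition endQ [set: 'I_N].

Lemma piQ_partition : partition piQ [set: 'I_N].
Proof. exact: preim_partitionP. Qed.

Lemma mem_pblock_piQ a b : (b \in pblock piQ a) = (endQ a == endQ b).
Proof.
rewrite /piQ /preim_partition.
rewrite (pblock_equivalence_partition (R := fun x y => endQ x == endQ y)) ?in_setT //.
by move=> x y z _ _ _; split=> // /eqP ->.
Qed.

Lemma Q_noncrossing_le (p1 p2 p3 p4 : 'I_M) : p1 <= p2 -> p2 <= p3 -> p3 <= p4 ->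
  p3 \in pblock Q p1 -> p4 \in pblock Q p2 -> p2 \in pblock Q p1.
Proof.
rewrite !(mem_pblock_partition Q_partition) => h12 h23 h34 /eqP e13 /eqP e24.
case: (ltngtP p1 p2) h12 => // l12 _; last by rewrite (val_inj l12).
case: (ltngtP p2 p3) h23 => // l23 _; last by rewrite e13 (val_inj l23).
case: (ltngtP p3 p4) h34 => // l34 _; last by rewrite e13 (val_inj l34) e24.
apply/negPn/negP => ne.
have [B1 p1B] := pblock_partition Q_partition p1; have [B2 p2B] := pblock_partition Q_partition p2.
apply: (Q_noncrossing B1 B2 ne l12 l23 l34 p1B _ p2B); rewrite (mem_pblock_partition Q_partition).
  by rewrite e13.
by rewrite e24.
Qed.

(* Positions 0 and N.-1 of [N] both map to 0, which is why only a weak version of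
   noncrossing transfers through phi0. *)
Lemma same_Qblock_noncrossing (a b c d : 'I_N) : a < b -> b < c -> c < d ->
  same_Qblock a c -> same_Qblock b d -> same_Qblock a b.
Proof.
move=> ab bc cd hac hbd.
have [dN | dN] := eqVneq (d : nat) N.-1; last first.
  have dlt : d < N.-1 by have := ltn_ord d; lia.
  have mono (u v : 'I_N) : u < v -> v <= d -> phi_ord u <= phi_ord v.
    by move=> uv vd; apply: (leq_phi0 k_gt0 n_gt0) (ltnW uv) (leq_ltn_trans vd dlt).
  apply: (Q_noncrossing_le _ _ _ hac hbd).
  - exact: mono ab (ltnW (ltn_trans bc cd)).
  - exact: mono bc (ltnW cd).
  - exact: mono cd (leqnn _).
have pd : phi0 k n d = 0 by rewrite dN phi0_last.
have [a0 | a_ne0] := eqVneq (a : nat) 0.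
  have had : same_Qblock a d.
    rewrite /same_Qblock (_ : phi_ord d = phi_ord a) ?(pblock_partition Q_partition _).2 //.
    by apply: val_inj; rewrite /= pd a0 /phi0; case: ifP; rewrite ?div0n.
  by apply: same_Qblock_trans had _; rewrite same_Qblock_sym.
have hda : same_Qblock d a.
  have hdb : same_Qblock d b by rewrite same_Qblock_sym.
  apply: (Q_noncrossing_le _ _ _ hdb hac).
  - by rewrite /= pd.
  - by apply: (leq_phi0 k_gt0 n_gt0); [apply: ltnW | have := ltn_ord d; lia].
  - by apply: (leq_phi0 k_gt0 n_gt0); [apply: ltnW | have := ltn_ord d; lia].
by apply: (@same_Qblock_trans d); rewrite same_Qblock_sym.
Qed.

(* Two crossing blocks of piQ lie in one Q-block, so their ends (both residue k) are each
   reached first from the wrong side. *)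
Lemma piQ_noncrossing : noncrossing piQ.
Proof.
move=> a b c d A B AP BP AB ab bc cd aA cA bB dB.
have eA := pblock_partitionE piQ_partition AP aA; have eB := pblock_partitionE piQ_partition BP bB.
have ec : endQ a = endQ c by apply/eqP; rewrite -mem_pblock_piQ eA.
have ed : endQ b = endQ d by apply/eqP; rewrite -mem_pblock_piQ eB.
have ne : (endQ a : nat) != endQ b.
  apply: contra AB => /eqP/val_inj e; apply/eqP/(block_eq piQ_partition AP BP _ bB).
  by rewrite -eA mem_pblock_piQ e.
have hac := same_Qblock_endQ ec; have hbd := same_Qblock_endQ ed.
have hab := same_Qblock_noncrossing ab bc cd hac hbd.
have [ha ra mina] := endQ_spec a; have [hb rb minb] := endQ_spec b.
have [hc _ minc] := endQ_spec c; have [hd _ mind] := endQ_spec d.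
rewrite -ec in hc minc; rewrite -ed in hd mind.
have t1 : same_Qblock a (endQ b) by apply: same_Qblock_trans hab hb.
have t2 : same_Qblock b (endQ a) by apply: (same_Qblock_trans _ ha); rewrite same_Qblock_sym.
have t3 : same_Qblock c (endQ b) by apply: (same_Qblock_trans _ t1); rewrite same_Qblock_sym.
have t4 : same_Qblock d (endQ a) by apply: (same_Qblock_trans _ t2); rewrite same_Qblock_sym.
exact: (cdist_crossing ab bc cd (ltn_ord d) (ltn_ord (endQ a)) (ltn_ord (endQ b)) ne
   (mina _ t1 rb) (minb _ t2 ra) (minc _ t3 rb) (mind _ t4 ra)).
Qed.

(* Between two points of a Q-block with the same residue there is a point w of residue 0;
   then cpred (psi w) is a candidate end strictly before y2, hence before endQ y1. *)
Lemma endQ_mod_inj_far (y1 y2 : 'I_N) : endQ y1 = endQ y2 -> y1 %% k.+1 = y2 %% k.+1 ->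
  y1 %% k.+1 != k -> y1 != y2 -> cdist N y2 (endQ y1) < cdist N y1 (endQ y1) -> False.
Proof.
move=> ee er r1 y12 hd.
have [h1 re min1] := endQ_spec y1; have [h2 _ _] := endQ_spec y2; rewrite -ee in h2.
have r2 : y2 %% k.+1 != k by rewrite -er.
set x1 := phi_ord y1; set x2 := phi_ord y2.
have ey1 : psi k x1 = y1 by rewrite /= phi0K.
have ey2 : psi k x2 = y2 by rewrite /= phi0K.
have x12 : x1 != x2 by apply: contra y12 => /eqP e; rewrite -val_eqE /= -ey1 -ey2 e.
have rx : x2 %% k <= x1 %% k by rewrite -(psi_mod _ k_gt0) -(psi_mod _ k_gt0) ey1 ey2 er.
have hy12 : same_Qblock y1 y2 by apply: (same_Qblock_trans h1); rewrite same_Qblock_sym.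
have [BQ x1B] := pblock_partition Q_partition x1.
have [w [wB w0 dw dwle]] :=
  block_mod0_in_arc Q_partition Q_noncrossing dvdn_card_Q dvdn_M BQ k_gt0 x1B hy12 x12 rx.
pose z := Ordinal (cpred_lt (psi_ltN k_gt0 n_gt0 (ltn_ord w))).
have hz : same_Qblock y1 z.
  by rewrite /same_Qblock (_ : phi_ord z = w) //; apply: val_inj; rewrite /= phi0_cpred_psi.
have m1 := min1 z hz (cpred_psi_mod k_gt0 n_gt0 (ltn_ord w) w0).
have pd := psi_cdist k_gt0 n_gt0 (ltn_ord x1) (ltn_ord w) (ltn_ord x2) dwle.
rewrite ey1 ey2 in pd.
have lw := psi_ltN k_gt0 n_gt0 (ltn_ord w).
have pwne : psi k w != y1.
  by rewrite -ey1 (inj_eq (@psi_inj k)); apply: contraTneq dw => ->; rewrite cdistnn.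
have dpos : 0 < cdist N y1 (psi k w) by rewrite cdist_gt0 // eq_sym.
have dz : cdist N y1 z = (cdist N y1 (psi k w)).-1 := cdist_cpred (ltn_ord y1) lw pwne.
have y2e : (y2 : nat) != endQ y1 by apply: contra r2 => /eqP ->; rewrite re.
have := cdist_lt_of_closer (ltn_ord y1) (ltn_ord y2) (ltn_ord (endQ y1)) y2e hd.
by move: m1 dz pd dpos; clear; lia.
Qed.

Lemma endQ_mod_inj (y1 y2 : 'I_N) : endQ y1 = endQ y2 -> y1 %% k.+1 = y2 %% k.+1 -> y1 = y2.
Proof.
move=> ee er; have [// | y12] := eqVneq y1 y2.
have [r1 | r1] := eqVneq (y1 %% k.+1) k.
  have r2 : y2 %% k.+1 = k by rewrite -er.
  by rewrite -(endQ_id r1) -(endQ_id r2) ee.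
have [h | h | h] := ltngtP (cdist N y2 (endQ y1)) (cdist N y1 (endQ y1)).
- by case: (endQ_mod_inj_far ee er r1 y12 h).
- case: (@endQ_mod_inj_far y2 y1 (esym ee) (esym er)).
  + by rewrite -er.
  + by rewrite eq_sym.
  + by rewrite -ee.
- exact/val_inj/(cdist_injl (ltn_ord y1) (ltn_ord y2) (ltn_ord (endQ y1))).
Qed.

Lemma card_piQ_block_le B : B \in piQ -> #|B| <= k.+1.
Proof.
case/imsetP => x _ ->.
pose f (y : 'I_N) : 'I_k.+1 := inord (y %% k.+1).
have f_inj : {in [set y in [set: 'I_N] | endQ x == endQ y] &, injective f}.
  move=> a b; rewrite !inE /= => /eqP ha /eqP hb /(congr1 val).
  by rewrite /= !inordK ?ltn_pmod //; apply: endQ_mod_inj; rewrite -ha -hb.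
by rewrite -(card_in_imset f_inj); apply: leq_trans (max_card _) _; rewrite card_ord.
Qed.

Lemma card_mod_k : #|[set z : 'I_N | z %% k.+1 == k]| <= n.
Proof.
have hl (j : 'I_n) : j * k.+1 + k < N by have := ltn_ord j; nia.
pose h (j : 'I_n) := Ordinal (hl j).
apply: leq_trans (_ : #|h @: [set: 'I_n]| <= n); last first.
  by have := leq_imset_card h [set: 'I_n]; rewrite cardsT card_ord.
apply: subset_leq_card; apply/subsetP => z; rewrite inE => /eqP rz.
have [q [r [hr ez hq hr2]]] := divn_modn_decomp z (ltn0Sn k).
have qn : q < n by rewrite -hq ltn_divLR // [n * _]mulnC.
by apply/imsetP; exists (Ordinal qn); rewrite ?in_setT //; apply: val_inj; rewrite /= ez -hr2 rz.
Qed.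

(* Each block of piQ contains its (common) end, a point of residue k; there are n of these. *)
Lemma card_piQ_le : #|piQ| <= n.
Proof.
apply: leq_trans card_mod_k.
pose blk (x : 'I_N) := [set y in [set: 'I_N] | endQ x == endQ y].
apply: leq_trans (leq_imset_card blk _); apply: subset_leq_card; apply/subsetP => B.
case/imsetP => x _ ->; have [_ rx _] := endQ_spec x.
by apply/imsetP; exists (endQ x); rewrite ?inE ?rx // /blk (endQ_id rx).
Qed.

Lemma card_piQ_block B : B \in piQ -> #|B| = k.+1.
Proof.
move=> BP.
have tot : \sum_(C in piQ) #|C| = N by rewrite -(card_partition piQ_partition) cardsT card_ord.
have gap : \sum_(C in piQ) (k.+1 - #|C|) = #|piQ| * k.+1 - N.
  by rewrite sumnB ?sum_nat_const ?tot // => C; apply: card_piQ_block_le.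
have : k.+1 - #|B| <= \sum_(C in piQ) (k.+1 - #|C|) by rewrite (bigD1 B) //= leq_addr.
have := card_piQ_block_le BP; have := leq_mul card_piQ_le (leqnn k.+1).
by rewrite gap; move: #|B| #|piQ| => b p; clear; nia.
Qed.

Lemma piQ_NClow : NClow k n piQ.
Proof.
by split; [exact: piQ_partition | split; [exact: piQ_noncrossing | exact: card_piQ_block]].
Qed.

Local Notation R := (phi_rel piQ).

Lemma phi_rel_piQ (a b : 'I_N) : endQ a = endQ b -> R (phi_ord a) (phi_ord b).
Proof.
move=> e; have [aP aA] := pblock_partition piQ_partition a.
apply/existsP; exists (pblock piQ a); rewrite aP; apply/existsP; exists a; rewrite aA.
by apply/existsP; exists b; rewrite mem_pblock_piQ e !eqxx.
Qed.

Section BlockSuccessor.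
Variables x s : 'I_M.
Hypotheses (sB : s \in pblock Q x) (sx : s != x).
Hypothesis s_next : forall w, w \in pblock Q x -> w != x -> cdist M x s <= cdist M x w.

Local Notation y0 := (psi_ord x).

Lemma psi_ord_neq (w : 'I_M) : w != x -> psi k w != y0.
Proof. by rewrite /= (inj_eq (@psi_inj k)). Qed.

(* The candidate ends related to y0 are the cpred (psi w) for w of residue 0 in the Q-block of
   x; apart from w = x (giving cpred y0), they all lie beyond psi s. *)
Lemma end_candidate_cdist (z : 'I_N) : same_Qblock y0 z -> z %% k.+1 = k ->
  cdist N y0 z = N - 1 \/ exists2 w : 'I_M, w %% k = 0 &
    (cdist N y0 z).+1 = cdist N y0 (psi k w) /\ cdist N y0 (psi k s) <= cdist N y0 (psi k w).
Proof.
move=> hz rz; set w := phi_ord z.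
have wB : w \in pblock Q x by move: hz; rewrite /same_Qblock psi_ordK.
have ez : cpred N (psi k w) = z := cpred_psi_phi0 k_gt0 n_gt0 (ltn_ord z) rz.
have [wx | wx] := eqVneq w x.
  by left; rewrite -ez wx cdist_cpredr ?N_gt1.
right; exists w; first by rewrite /w /= (phi0_modk k_gt0 n_gt0 (ltn_ord z) rz).
have lw := psi_ltN k_gt0 n_gt0 (ltn_ord w).
have dpos : 0 < cdist N y0 (psi k w) by rewrite cdist_gt0 // eq_sym psi_ord_neq.
rewrite -{1}ez cdist_cpred ?psi_ord_neq // prednK //; split=> //.
by move: (psi_cdist k_gt0 n_gt0 (ltn_ord x) (ltn_ord s) (ltn_ord w) (s_next wB wx)).
Qed.

Lemma phi_rel_block_succ_mod0 : s %% k = 0 -> R x s.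
Proof.
move=> s0; pose z0 := Ordinal (cpred_lt (psi_ltN k_gt0 n_gt0 (ltn_ord s))).
have pz : phi_ord z0 = s by apply: val_inj; rewrite /= phi0_cpred_psi.
have rz0 : z0 %% k.+1 = k := cpred_psi_mod k_gt0 n_gt0 (ltn_ord s) s0.
have ls := psi_ltN k_gt0 n_gt0 (ltn_ord s).
have dz0 : (cdist N y0 z0).+1 = cdist N y0 (psi k s).
  by rewrite cdist_cpred ?psi_ord_neq // prednK // cdist_gt0 // eq_sym psi_ord_neq.
have ez : endQ y0 = z0.
  apply: (endpt_eq _ rz0); first by rewrite /same_Qblock pz psi_ordK.
  move=> z hz rz; case: (end_candidate_cdist hz rz) => [-> | [w _ [dz le]]].
    by have := cdist_lt (ltn_ord y0) (ltn_ord z0); lia.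
  by rewrite -ltnS dz0 dz.
by have := @phi_rel_piQ y0 z0; rewrite psi_ordK pz ez endQ_id //; apply.
Qed.

Lemma phi_rel_block_succ_inner : s %% k != 0 -> R x s.
Proof.
move=> s_ne0; set b := psi_ord s.
have ls := ltn_ord b; have ly0 := ltn_ord y0.
have rb : b %% k.+1 != k by rewrite /= (psi_mod _ k_gt0) ltn_eqF ?ltn_pmod.
have hb : same_Qblock y0 b by rewrite /same_Qblock !psi_ordK.
have b_first z : same_Qblock y0 z -> z %% k.+1 = k -> cdist N y0 b < cdist N y0 z.
  move=> hz rz; have lz := ltn_ord z.
  have bz : cdist N y0 b != cdist N y0 z.
    by apply: contra rb => /eqP/(cdist_inj ly0 ls lz) ->; rewrite rz.
  rewrite ltn_neqAle bz andTb; case: (end_candidate_cdist hz rz) => [-> | [w w0 [dz le]]].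
    by have := cdist_lt ly0 ls; lia.
  have ws : psi k w != psi k s.
    by apply: contra s_ne0 => /eqP e; rewrite -(psi_mod s k_gt0) -e psi_mod // w0.
  have : cdist N y0 b != cdist N y0 (psi k w).
    have lw := psi_ltN k_gt0 n_gt0 (ltn_ord w).
    by apply: contra ws => /eqP/(cdist_inj ly0 ls lw) <-; apply/eqP.
  have le' : cdist N y0 b <= cdist N y0 (psi k w) := le.
  by move: le' dz; lia.
have [hbe rbe minb] := endQ_spec b.
have ee : endQ y0 = endQ b.
  apply: (endpt_eq _ rbe); first exact: same_Qblock_trans hb hbe.
  move=> z hz rz.
  have d1 := cdist_split ly0 ls (ltn_ord z) (ltnW (b_first z hz rz)).
  have := b_first _ (same_Qblock_trans hb hbe) rbe.
  move/ltnW/(cdist_split ly0 ls (ltn_ord (endQ b))) => d2.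
  have hbz : same_Qblock b z by apply: same_Qblock_trans hz; rewrite same_Qblock_sym.
  by rewrite d1 d2 leq_add2l minb.
by have := phi_rel_piQ ee; rewrite !psi_ordK.
Qed.

Lemma phi_rel_block_succ : R x s.
Proof.
by have [/phi_rel_block_succ_mod0 | /phi_rel_block_succ_inner] := eqVneq (s %% k) 0.
Qed.

End BlockSuccessor.

Lemma closed_phi_rel_pblock (x : 'I_M) : closed R (pblock Q x).
Proof.
have tQ : trivIset Q by case/and3P: Q_partition.
have xc : x \in cover Q by rewrite (cover_partition Q_partition) in_setT.
move=> u v /existsP[V /andP[VP /existsP[a /andP[aV /existsP[b /andP[bV /andP[/eqP ha /eqP hb]]]]]]].
have eab : endQ a = endQ b.
  by apply/eqP; rewrite -mem_pblock_piQ (pblock_partitionE piQ_partition VP aV).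
have -> : u = phi_ord a by apply: val_inj.
have -> : v = phi_ord b by apply: val_inj.
rewrite -!(eq_pblock _ tQ xc); move: (same_Qblock_endQ eab).
by rewrite same_QblockE => /eqP ->.
Qed.

(* Walk from x to y through the successive points of their Q-block. *)
Lemma connect_phi_rel_pblock (x y : 'I_M) : y \in pblock Q x -> connect R x y.
Proof.
move: {2}(cdist M x y) (leqnn (cdist M x y)) => d; elim: d x y => [|d IH] x y hd yB.
  by move: hd; rewrite leqn0 cdist_eq0 // => /eqP/val_inj ->.
have [-> | yx] := eqVneq y x; first exact: connect0.
have [BQ xB] := pblock_partition Q_partition x.
have gt1 : 1 < #|pblock Q x| by apply/card_gt1P; exists x, y; rewrite eq_sym.
have [s [sB sx s_next]] := exists_block_next BQ xB gt1.
have ds := cdist_split (ltn_ord x) (ltn_ord s) (ltn_ord y) (s_next y yB yx).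
have dpos : 0 < cdist M x s by rewrite cdist_gt0 // eq_sym.
apply: connect_trans (connect1 (phi_rel_block_succ sB sx s_next)) (IH s y _ _); first by lia.
by rewrite (pblock_partitionE Q_partition BQ sB).
Qed.

Lemma connect_phi_rel_piQ (x y : 'I_M) : connect R x y = (y \in pblock Q x).
Proof.
apply/idP/idP => [hxy | ]; last exact: connect_phi_rel_pblock.
by have := closed_connect (closed_phi_rel_pblock x) hxy; rewrite (pblock_partition Q_partition x).2.
Qed.

Lemma f_map_piQ : f_map k n piQ = Q.
Proof.
rewrite /f_map (@eq_equivalence_partition _ _ (fun x y => y \in pblock Q x)).
  exact: equivalence_partition_pblock.
exact: connect_phi_rel_piQ.
Qed.

End Backward.

Theorem lemma5p1 (n k : nat) (hn : 0 < n) (hk : 0 < k) :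
  (forall pi, NClow k n pi -> NCup k n (f_map k n pi)) /\
  (forall pi1 pi2, NClow k n pi1 -> NClow k n pi2 -> f_map k n pi1 = f_map k n pi2 -> pi1 = pi2) /\
  (forall Q, NCup k n Q -> exists pi, NClow k n pi /\ f_map k n pi = Q).
Proof.
split; first by move=> pi; apply: f_NCup.
split; last by move=> Q HQ; exists (piQ hk hn Q); split; [exact: piQ_NClow | exact: f_map_piQ].
move=> pi1 pi2 H1 H2 ef.
have same12 : same_fblock hk hn pi1 =2 same_fblock hk hn pi2.
  by move=> a b; rewrite !same_fblockE ef.
rewrite (pi_preim_endpt hk hn H1) (pi_preim_endpt hk hn H2).
by apply: eq_equivalence_partition => a b; rewrite !(eq_endpt k same12).
Qed.
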